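(* Let $n\ge 1$ and let $u:([0,1]^n,d_n)\to([0,1],d)$ be uniformly continuous, where $d$ is the standard metric on $[0,1]$ and $d_n$ the max-metric on $[0,1]^n$. The following are equivalent: (1) For every complete metric space $(Y,d)$ of diameter at most 1 and all uniformly continuous $\phi_i,\phi_i':Y\to[0,1]$ ($i=1,\dots,n$) with $\phi_i\simeq\phi_i'$ for each $i$, one has $u(\phi_1,\dots,\phi_n)\simeq u(\phi_1',\dots,\phi_n')$. (2) For all $p,q\in[0,1]^n$ such that $p_i=0\iff q_i=0$ for every $i$, either $u(p)=u(q)=0$, or $u(p)>0$ and $u(q)>0$. (3) There is $A\subseteq\mathcal P(\{1,\dots,n\})$ such that $u^{-1}(0)=\bigcup_{K\in A}\{z\in[0,1]^n : z_i=0\iff i\in K\}$.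
   Context: For functions $\alpha,\beta:Y\to[0,1]$ write $\alpha\sqsubseteq\beta$ if for every $\varepsilon>0$ there exists $\delta>0$ such that for all $y$, $\alpha(y)\le\delta$ implies $\beta(y)\le\varepsilon$; and $\alpha\simeq\beta$ if $\alpha\sqsubseteq\beta$ and $\beta\sqsubseteq\alpha$. For functions $\phi_1,\dots,\phi_n:Y\to[0,1]$, $u(\phi_1,\dots,\phi_n)$ denotes the function $y\mapsto u(\phi_1(y),\dots,\phi_n(y))$. *)

(* Stdlib reals (R), with MathComp ordinals 'I_n and finite sets {set 'I_n}
   for the index set {1,...,n} (represented as {0,...,n-1}). *)
From Stdlib Require Import Reals.
From mathcomp Require Import all_boot.
Open Scope R_scope.

Definition is_metric {Y : Type} (d : Y -> Y -> R) : Prop :=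
  (forall x y, 0 <= d x y) /\
  (forall x y, d x y = 0 <-> x = y) /\
  (forall x y, d x y = d y x) /\
  (forall x y z, d x z <= d x y + d y z).

Definition cauchy_seq {Y : Type} (d : Y -> Y -> R) (s : nat -> Y) : Prop :=
  forall eps, 0 < eps -> exists N : nat,
    forall m k : nat, (N <= m)%N -> (N <= k)%N -> d (s m) (s k) < eps.

Definition converges_to {Y : Type} (d : Y -> Y -> R) (s : nat -> Y) (l : Y) : Prop :=
  forall eps, 0 < eps -> exists N : nat, forall m : nat, (N <= m)%N -> d (s m) l < eps.

Definition complete_metric {Y : Type} (d : Y -> Y -> R) : Prop :=
  is_metric d /\
  forall s : nat -> Y, cauchy_seq d s -> exists l, converges_to d s l.

Definition diam_le1 {Y : Type} (d : Y -> Y -> R) : Prop :=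
  forall x y, d x y <= 1.

Definition unif_cont01 {Y : Type} (d : Y -> Y -> R) (f : Y -> R) : Prop :=
  (forall y, 0 <= f y <= 1) /\
  forall eps, 0 < eps -> exists delta, 0 < delta /\
    forall x y, d x y < delta -> Rabs (f x - f y) < eps.

Definition fsub {Y : Type} (alpha beta : Y -> R) : Prop :=
  forall eps, 0 < eps -> exists delta, 0 < delta /\
    forall y, alpha y <= delta -> beta y <= eps.

Definition fequiv {Y : Type} (alpha beta : Y -> R) : Prop :=
  fsub alpha beta /\ fsub beta alpha.

Definition in_cube (n : nat) (p : 'I_n -> R) : Prop :=
  forall i, 0 <= p i <= 1.

(* u : ([0,1]^n, d_n) -> ([0,1], d) uniformly continuous;
   d_n(p,q) < delta  <->  forall i, |p i - q i| < delta *)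
Definition unif_cont_cube (n : nat) (u : ('I_n -> R) -> R) : Prop :=
  (forall p, in_cube _ p -> 0 <= u p <= 1) /\
  forall eps, 0 < eps -> exists delta, 0 < delta /\
    forall p q, in_cube _ p -> in_cube _ q ->
      (forall i, Rabs (p i - q i) < delta) -> Rabs (u p - u q) < eps.

Definition ucomp {Y : Type} (n : nat) (u : ('I_n -> R) -> R) (phi : 'I_n -> Y -> R)
  : Y -> R := fun y => u (fun i => phi i y).

(* Write (2) as "u is zero-pattern stable": whether u(p) vanishes depends only
   on the set of coordinates at which p vanishes.

   (1) -> (2): take the one-point space Y and constant functions.  For constants
   a, b >= 0 one has a ⊑ b iff (a = 0 -> b = 0), so (1) says exactly that
   u(p) = 0 <-> u(q) = 0 whenever p and q have the same zero pattern.

   (2) -> (1): suppose u(phi) ⋢ u(phi').  Then there are eps > 0 and points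
   y_k with u(phi(y_k)) <= 1/(k+1) and u(phi'(y_k)) > eps.  By compactness of
   the cube (Tychonoff) the pairs (phi(y_k), phi'(y_k)) have a cluster point
   (a, b).  Uniform continuity gives u(a) = 0 and u(b) >= eps, while
   phi_i ≃ phi'_i forces a and b to have the same zero pattern, contradicting (2).

   (2) <-> (3): the zero set of u is a union of zero-pattern classes exactly
   when it is determined by the zero pattern; A is the set of patterns of the
   zeros of u. *)

From Stdlib Require Import Reals Lra Lia Classical.
From mathcomp Require Import all_boot all_algebra.
From mathcomp Require Import all_classical all_reals all_analysis.
From mathcomp Require Import Rstruct Rstruct_topology.
Import numFieldNormedType.Exports.

Definition cluster_point {I : Type} (x : nat -> I -> R) (c : I -> R) : Prop :=
  forall eta, Rlt 0 eta -> forall N, exists k, (N <= k)%N /\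
    forall i, Rlt (Rabs (Rminus (x k i) (c i))) eta.

Section Compactness.
Local Open Scope classical_set_scope.

Lemma cube_cluster_point (I : finType) (x : nat -> I -> R) :
  (forall k i, Rle 0 (x k i) /\ Rle (x k i) 1) ->
  exists c : I -> R, (forall i, Rle 0 (c i) /\ Rle (c i) 1) /\ cluster_point x c.
Proof.
move=> hx.
have cube_compact := @tychonoff I (fun _ => R) (fun _ => `[0%R, 1%R])
  (fun _ => @segment_compact R 0%R 1%R).
have [] := cube_compact (x @ \oo) (fmap_proper_filter _ _).
  exists 0%N => // k _ i /=; have [h0 h1] := hx k i.
  by rewrite in_itv /=; apply/andP; split; apply/RleP.
move=> c [c_cube c_cluster]; exists c; split.
  by move=> i; move: (c_cube i); rewrite /= in_itv /= => /andP[/RleP ? /RleP ?].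
move=> eta eta_gt0 N.
case: (c_cluster [set f | exists2 k, (N <= k)%N & f = x k]
  [set f | forall i, Rlt (Rabs (Rminus (f i) (c i))) eta]).
- by exists N => // k hk; exists k.
- apply: (@filter_forall _ I (fun i => [set f : I -> R |
    Rlt (Rabs (Rminus (f i) (c i))) eta]) (nbhs c)) => i.
  have : \forall f \near c, ball (c i) eta (f i).
    by apply: (@proj_continuous I (fun _ => R) i c); apply/nbhsx_ballx/RltP.
  apply: filterS => f; rewrite /ball /= => /RltP.
  by rewrite -Rabs_Ropp Ropp_minus_distr.
- by move=> f [[k hk ->] close]; exists k.
Qed.
End Compactness.

Open Scope R_scope.

Lemma cluster_point_reindex {I J : Type} (f : J -> I)
  {x : nat -> I -> R} {c : I -> R} :
  cluster_point x c -> cluster_point (fun k j => x k (f j)) (fun j => c (f j)).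
Proof.
by move=> hc eta eta_gt0 N; have [k [hk close]] := hc eta eta_gt0 N; exists k.
Qed.

Lemma unif_cont_cluster_value {n : nat} {u : ('I_n -> R) -> R}
  (hu : unif_cont_cube n u) {x : nat -> 'I_n -> R} {c : 'I_n -> R} :
  (forall k, in_cube n (x k)) -> in_cube n c -> cluster_point x c ->
  forall eps, 0 < eps -> forall N, exists k, (N <= k)%N /\ Rabs (u (x k) - u c) < eps.
Proof.
move=> x_cube c_cube hc eps eps_gt0 N.
have [delta [delta_gt0 hdelta]] := proj2 hu eps eps_gt0.
have [k [hk close]] := hc delta delta_gt0 N.
by exists k; split=> //; apply: hdelta.
Qed.

Lemma cluster_value_vanishes {n : nat} {u : ('I_n -> R) -> R}
  (hu : unif_cont_cube n u) {x : nat -> 'I_n -> R} {c : 'I_n -> R} :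
  (forall k, in_cube n (x k)) -> in_cube n c -> cluster_point x c ->
  (forall k, u (x k) <= / (INR k + 1)) -> u c = 0.
Proof.
move=> x_cube c_cube hc small.
apply: Rle_antisym; last exact: proj1 (proj1 hu c c_cube).
apply: Rnot_lt_le => uc_gt0.
have [N [N_large N_gt0]] := archimed_cor1 (u c / 2) ltac:(lra).
have [k [hk /Rabs_def2 close]] :=
  unif_cont_cluster_value hu x_cube c_cube hc (u c / 2) ltac:(lra) N.
have : / (INR k + 1) <= / INR N.
  apply: Rinv_le_contravar; first by apply: lt_0_INR; lia.
  by have := le_INR _ _ (elimT leP hk); lra.
by have := small k; lra.
Qed.

Lemma cluster_value_ge {n : nat} {u : ('I_n -> R) -> R}
  (hu : unif_cont_cube n u) {x : nat -> 'I_n -> R} {c : 'I_n -> R} {r : R} :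
  (forall k, in_cube n (x k)) -> in_cube n c -> cluster_point x c ->
  (forall k, r <= u (x k)) -> r <= u c.
Proof.
move=> x_cube c_cube hc large; apply: Rnot_lt_le => uc_lt.
have [k [_ /Rabs_def2 close]] :=
  unif_cont_cluster_value hu x_cube c_cube hc (r - u c) ltac:(lra) 0.
by have := large k; lra.
Qed.

Lemma fsub_cluster_zero {Y : Type} {alpha beta : Y -> R} {s : nat -> Y} {a b : R} :
  fsub alpha beta -> 0 <= b ->
  (forall eta, 0 < eta -> exists k,
     Rabs (alpha (s k) - a) < eta /\ Rabs (beta (s k) - b) < eta) ->
  a = 0 -> b = 0.
Proof.
move=> hsub b_ge0 hclose a0; apply: NNPP => b_neq0.
have b_gt0 : 0 < b by lra.
have [delta [delta_gt0 hdelta]] := hsub (b / 2) ltac:(lra).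
have [k [close_a close_b]] := hclose (Rmin delta (b / 2))
  ltac:(apply: Rmin_pos; lra).
have := Rmin_l delta (b / 2); have := Rmin_r delta (b / 2).
move: close_a close_b => /Rabs_def2 ? /Rabs_def2 ? ? ?.
have : beta (s k) <= b / 2 by apply: hdelta; lra.
lra.
Qed.

Lemma not_fsub (Y : Type) (alpha beta : Y -> R) :
  ~ fsub alpha beta ->
  exists eps, 0 < eps /\ forall delta, 0 < delta ->
    exists y, alpha y <= delta /\ eps < beta y.
Proof.
move=> hnot; apply: NNPP => hall; apply: hnot => eps eps_gt0.
apply: NNPP => hnodelta; apply: hall; exists eps; split=> // delta delta_gt0.
apply: NNPP => hnoy; apply: hnodelta; exists delta; split=> // y hy.
by apply: Rnot_lt_le => hlt; apply: hnoy; exists y.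
Qed.

Lemma fsub_const (a b : R) : 0 <= a -> 0 <= b ->
  fsub (fun _ : unit => a) (fun _ => b) <-> (a = 0 -> b = 0).
Proof.
move=> a_ge0 b_ge0; split.
- move=> hsub a0; apply: Rle_antisym => //.
  apply: Rnot_lt_le => b_gt0.
  have [delta [delta_gt0 /(_ tt)]] := hsub (b / 2) ltac:(lra).
  lra.
- move=> hab eps eps_gt0; have [a0|a_neq0] := Req_dec a 0.
  + by exists 1; split=> [|_ _]; [lra | rewrite (hab a0); lra].
  + by exists (a / 2); split=> [|_ ?]; lra.
Qed.

Lemma unit_complete_metric : complete_metric (fun _ _ : unit => 0).
Proof.
split.
  by split; [move=> *; lra | split; [by move=> [] [] | split=> *; lra]].
by move=> s _; exists tt => eps eps_gt0; exists 0%N.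
Qed.

Lemma const_unif_cont01 (Y : Type) (d : Y -> Y -> R) (a : R) :
  0 <= a <= 1 -> unif_cont01 d (fun _ => a).
Proof.
move=> a01; split=> // eps eps_gt0; exists 1; split=> [|x y _]; first lra.
by rewrite Rminus_diag Rabs_R0.
Qed.

Definition preserves_fequiv (n : nat) (u : ('I_n -> R) -> R) : Prop :=
  forall (Y : Type) (d : Y -> Y -> R), complete_metric d -> diam_le1 d ->
    forall phi phi' : 'I_n -> Y -> R,
      (forall i, unif_cont01 d (phi i)) -> (forall i, unif_cont01 d (phi' i)) ->
      (forall i, fequiv (phi i) (phi' i)) ->
      fequiv (ucomp n u phi) (ucomp n u phi').

Definition pattern_stable (n : nat) (u : ('I_n -> R) -> R) : Prop :=
  forall p q : 'I_n -> R, in_cube _ p -> in_cube _ q ->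
    (forall i, p i = 0 <-> q i = 0) ->
    (u p = 0 /\ u q = 0) \/ (0 < u p /\ 0 < u q).

Definition zero_set_of_patterns (n : nat) (u : ('I_n -> R) -> R) : Prop :=
  exists A : {set {set 'I_n}},
    forall z : 'I_n -> R, in_cube _ z ->
      (u z = 0 <-> exists2 K, K \in A & forall i, z i = 0 <-> i \in K).

Lemma pattern_stableP (n : nat) (u : ('I_n -> R) -> R) :
  (forall p, in_cube n p -> 0 <= u p) ->
  pattern_stable n u <->
  (forall p q, in_cube n p -> in_cube n q -> (forall i, p i = 0 <-> q i = 0) ->
     (u p = 0 <-> u q = 0)).
Proof.
move=> u_ge0; split=> hu p q p_cube q_cube hpq.
- by case: (hu p q p_cube q_cube hpq) => [[-> ->] | [? ?]]; lra.
- have := hu p q p_cube q_cube hpq; have := u_ge0 p p_cube; have := u_ge0 q q_cube.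
  by have [|] := Req_dec (u p) 0; have [|] := Req_dec (u q) 0; intuition lra.
Qed.

Lemma pattern_stable_of_preserves (n : nat) (u : ('I_n -> R) -> R) :
  unif_cont_cube n u -> preserves_fequiv n u -> pattern_stable n u.
Proof.
move=> hu hpres; have u_ge0 p (p_cube : in_cube n p) := proj1 (proj1 hu p p_cube).
apply/pattern_stableP => // p q p_cube q_cube hpq.
have const_equiv (a b : R) : 0 <= a -> 0 <= b ->
    fequiv (fun _ : unit => a) (fun _ => b) <-> (a = 0 <-> b = 0).
  by move=> ? ?; rewrite /fequiv !fsub_const //; tauto.
apply/const_equiv; try exact: u_ge0.
apply: (hpres unit _ unit_complete_metric) => [x y | i | i | i].
- lra.
- exact/const_unif_cont01/p_cube.
- exact/const_unif_cont01/q_cube.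
- by apply/const_equiv; [apply: (proj1 (p_cube i)) | apply: (proj1 (q_cube i)) |].
Qed.

Lemma pattern_stable_fsub (n : nat) (u : ('I_n -> R) -> R)
  (hu : unif_cont_cube n u) (hstable : pattern_stable n u)
  (Y : Type) (phi phi' : 'I_n -> Y -> R) :
  (forall i y, 0 <= phi i y <= 1) -> (forall i y, 0 <= phi' i y <= 1) ->
  (forall i, fequiv (phi i) (phi' i)) ->
  fsub (ucomp n u phi) (ucomp n u phi').
Proof.
move=> phi01 phi'01 hequiv; apply: NNPP => /not_fsub [eps [eps_gt0 hbad]].
have /choice [ys hys] : forall k : nat, exists y,
    ucomp n u phi y <= / (INR k + 1) /\ eps < ucomp n u phi' y.
  by move=> k; apply: hbad; apply: Rinv_0_lt_compat; have := pos_INR k; lra.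
pose x k (j : 'I_n + 'I_n) :=
  match j with inl i => phi i (ys k) | inr i => phi' i (ys k) end.
have [c [c_cube hc]] : exists c, (forall j, 0 <= c j <= 1) /\ cluster_point x c.
  by apply: cube_cluster_point => k [] i; [apply: phi01 | apply: phi'01].
pose a i := c (inl i); pose b i := c (inr i).
have ha := cluster_point_reindex inl hc; have hb := cluster_point_reindex inr hc.
have a_cube : in_cube n a by move=> i; apply: c_cube.
have b_cube : in_cube n b by move=> i; apply: c_cube.
have ua0 : u a = 0.
  apply: (cluster_value_vanishes hu _ a_cube ha) => [k i | k].
  - exact: phi01.
  - exact: (proj1 (hys k)).
have ub_ge : eps <= u b.
  apply: (cluster_value_ge hu _ b_cube hb) => [k i | k].
  - exact: phi'01.
  - exact: Rlt_le (proj2 (hys k)).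
have same_pattern i : a i = 0 <-> b i = 0.
  have close eta : 0 < eta -> exists k,
      Rabs (phi i (ys k) - a i) < eta /\ Rabs (phi' i (ys k) - b i) < eta.
    move=> /(hc eta)/(_ 0%N) [k [_ hk]]; exists k.
    by split; [apply: (hk (inl i)) | apply: (hk (inr i))].
  split.
  - exact: fsub_cluster_zero (proj1 (hequiv i)) (proj1 (b_cube i)) close.
  - apply: (fsub_cluster_zero (s := ys) (proj2 (hequiv i)) (proj1 (a_cube i))).
    by move=> eta /(close eta) [k [? ?]]; exists k.
by have [[_ ub0] | [ua_gt0 _]] := hstable a b a_cube b_cube same_pattern; lra.
Qed.

Lemma preserves_of_pattern_stable (n : nat) (u : ('I_n -> R) -> R) :
  unif_cont_cube n u -> pattern_stable n u -> preserves_fequiv n u.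
Proof.
move=> hu hstable Y d _ _ phi phi' uc uc' hequiv.
have phi01 i y : 0 <= phi i y <= 1 by apply: (proj1 (uc i)).
have phi'01 i y : 0 <= phi' i y <= 1 by apply: (proj1 (uc' i)).
have hequiv' i : fequiv (phi' i) (phi i) by have [? ?] := hequiv i; split.
by split; apply: pattern_stable_fsub.
Qed.

Definition zero_pattern {n : nat} (z : 'I_n -> R) : {set 'I_n} :=
  [set i | `[< z i = 0 >] ].

Lemma in_zero_pattern {n : nat} (z : 'I_n -> R) (i : 'I_n) :
  i \in zero_pattern z <-> z i = 0.
Proof. by rewrite inE; split=> /asboolP. Qed.

Lemma zero_patternE {n : nat} (z : 'I_n -> R) (K : {set 'I_n}) :
  (forall i, z i = 0 <-> i \in K) <-> zero_pattern z = K.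
Proof.
split=> [hK | <- i]; last by rewrite in_zero_pattern.
by apply/setP => i; apply/idP/idP => [/in_zero_pattern/hK | /hK/in_zero_pattern].
Qed.

Lemma zero_pattern_eqP {n : nat} (p q : 'I_n -> R) :
  zero_pattern p = zero_pattern q <-> (forall i, p i = 0 <-> q i = 0).
Proof. by rewrite -zero_patternE; split=> hpq i; rewrite hpq in_zero_pattern. Qed.

Lemma zero_set_of_patternsP (n : nat) (u : ('I_n -> R) -> R) :
  zero_set_of_patterns n u <->
  exists A : {set {set 'I_n}},
    forall z, in_cube n z -> (u z = 0 <-> zero_pattern z \in A).
Proof.
have mem_pattern (A : {set {set 'I_n}}) z :
    (exists2 K, K \in A & forall i, z i = 0 <-> i \in K) <-> zero_pattern z \in A.
  split=> [[K KA /zero_patternE ->] // | zA].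
  by exists (zero_pattern z) => // i; rewrite in_zero_pattern.
by split=> [] [A hA]; exists A => z z_cube; rewrite hA // mem_pattern.
Qed.

Lemma pattern_stable_iff_zero_set (n : nat) (u : ('I_n -> R) -> R) :
  (forall p, in_cube n p -> 0 <= u p) ->
  pattern_stable n u <-> zero_set_of_patterns n u.
Proof.
move=> u_ge0; rewrite pattern_stableP // zero_set_of_patternsP; split.
- move=> hstable.
  exists [set K | `[< exists2 z, in_cube n z & u z = 0 /\ zero_pattern z = K >] ].
  move=> z z_cube; rewrite inE; split=> [uz0 | /asboolP [w w_cube [uw0 same]]].
    by apply/asboolP; exists z.
  by apply/(hstable w z) => //; apply/zero_pattern_eqP.
- move=> [A hA] p q p_cube q_cube /zero_pattern_eqP same.
  by rewrite hA // same -hA.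
Qed.

Theorem mainTheorem7 (n : nat) (hn : (1 <= n)%N) (u : ('I_n -> R) -> R)
  (hu : unif_cont_cube n u) :
  ((* (1) *)
   (forall (Y : Type) (d : Y -> Y -> R), complete_metric d -> diam_le1 d ->
     forall phi phi' : 'I_n -> Y -> R,
       (forall i, unif_cont01 d (phi i)) -> (forall i, unif_cont01 d (phi' i)) ->
       (forall i, fequiv (phi i) (phi' i)) ->
       fequiv (ucomp n u phi) (ucomp n u phi'))
   <->
   (* (2) *)
   (forall p q : 'I_n -> R, in_cube _ p -> in_cube _ q ->
     (forall i, p i = 0 <-> q i = 0) ->
     (u p = 0 /\ u q = 0) \/ (0 < u p /\ 0 < u q)))
  /\
  ((* (2) *)
   (forall p q : 'I_n -> R, in_cube _ p -> in_cube _ q ->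
     (forall i, p i = 0 <-> q i = 0) ->
     (u p = 0 /\ u q = 0) \/ (0 < u p /\ 0 < u q))
   <->
   (* (3) *)
   (exists A : {set {set 'I_n}},
     forall z : 'I_n -> R, in_cube _ z ->
       (u z = 0 <-> exists2 K, K \in A & forall i, z i = 0 <-> i \in K))).
Proof.
have u_ge0 p : in_cube n p -> 0 <= u p by move=> /(proj1 hu) [].
split.
- split; [exact: pattern_stable_of_preserves | exact: preserves_of_pattern_stable].
- exact: pattern_stable_iff_zero_set.
Qed.
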